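(* Let $N=[n]$, let $v:2^N\to\mathbb{R}_+$ be any monotone valuation with $v(\emptyset)=0$, and let $X$ be a maximal decision map for $v$. Let $p\in\mathbb{R}^n_+$, $S=X(p)$ and $\epsilon>0$, and define $p^\epsilon$ by $p^\epsilon_i=\max\{p_i-\frac{\epsilon}{n},0\}$ for $i\in S$ and $p^\epsilon_i=p_i$ for $i\notin S$. Then for any decision map $X'$ for $v$, the set $S^\epsilon=X'(p^\epsilon)$ satisfies $S\cap\{j:p_j>0\}\subseteq S^\epsilon\subseteq S$.
   Context: For $p\in\mathbb{R}^n_+$, $p(S)=\sum_{j\in S}p_j$ and $D(v;p)=\arg\max_{S\subseteq N}(v(S)-p(S))$. A decision map is $X:\mathbb{R}^n_+\to2^N$ with $X(p)\in D(v;p)$ for all $p$; it is maximal if for every $p$ there is no $S'\in D(v;p)$ with $X(p)\subsetneq S'$. The map $X'$ need not be maximal. *)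

From HB Require Import structures.
From mathcomp Require Import all_boot all_order all_algebra.
Set Implicit Arguments. Unset Strict Implicit. Unset Printing Implicit Defensive.
Import Order.TTheory GRing.Theory Num.Theory.
Local Open Scope ring_scope.

Section Defs.
Variables (R : realFieldType) (n : nat).

Definition nonneg_price (p : 'I_n -> R) : Prop := forall i, 0 <= p i.

Definition price_of (p : 'I_n -> R) (S : {set 'I_n}) : R := \sum_(j in S) p j.

Definition monotone_valuation (v : {set 'I_n} -> R) : Prop :=
  [/\ forall S : {set 'I_n}, 0 <= v S, v set0 = 0 & forall S T : {set 'I_n}, S \subset T -> v S <= v T].

Definition in_demand (v : {set 'I_n} -> R) (p : 'I_n -> R) (S : {set 'I_n}) : Prop :=
  forall T : {set 'I_n}, v T - price_of p T <= v S - price_of p S.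

Definition decision_map (v : {set 'I_n} -> R) (X : ('I_n -> R) -> {set 'I_n}) : Prop :=
  forall p, nonneg_price p -> in_demand v p (X p).

Definition maximal_decision_map (v : {set 'I_n} -> R) (X : ('I_n -> R) -> {set 'I_n}) : Prop :=
  decision_map v X /\
  forall p, nonneg_price p -> forall S', in_demand v p S' -> ~ (X p \proper S').

Definition perturb (p : 'I_n -> R) (S : {set 'I_n}) (eps : R) : 'I_n -> R :=
  fun i => if i \in S then Num.max (p i - eps / n%:R) 0 else p i.

End Defs.

From HB Require Import structures.
From mathcomp Require Import all_boot all_order all_algebra.
From mathcomp Require Import lra.
Set Implicit Arguments.
Unset Strict Implicit.
Unset Printing Implicit Defensive.
Import Order.TTheory GRing.Theory Num.Theory.
Local Open Scope ring_scope.

(** Write [q] for the perturbed prices and [d := p - q >= 0] for the discount,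
    which vanishes outside [S = X(p)] and is positive on [S] wherever [p] is.
    Revealed preference between [S] demanded at [p] and [S^eps] demanded at
    [q] gives [d(S) <= d(S^eps)], while the support of [d] forces
    [d(S^eps) <= d(S)].  Hence [d] vanishes on [S \ S^eps], which is the lower
    inclusion, and [S^eps] is also demanded at [p].  Adding to [S^eps] the
    zero-priced goods of [S] keeps it demanded at [p] by monotonicity of [v],
    so maximality of [X] rules out any good of [S^eps] outside [S]. *)

Section PriceSupport.
Variables (R : realFieldType) (n : nat).
Implicit Types (p q d : 'I_n -> R) (S T : {set 'I_n}).

Lemma price_ofB p q T :
  price_of (fun i => p i - q i) T = price_of p T - price_of q T.
Proof. exact: sumrB. Qed.

Lemma price_of_setU_free p S T :
  {in T :\: S, forall j, p j = 0} -> price_of p (S :|: T) = price_of p S.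
Proof.
move=> pT0; rewrite /price_of (big_setID S) /= setUK setDUl setDv set0U.
by rewrite [X in _ + X]big1 ?addr0.
Qed.

Section Supported.
Variables (d : 'I_n -> R) (S : {set 'I_n}).
Hypotheses (d_ge0 : forall i, 0 <= d i) (d_supp : forall i, i \notin S -> d i = 0).

Lemma price_of_le_support T : price_of d T <= price_of d S.
Proof.
rewrite /price_of big_mkcond [X in _ <= X]big_mkcond /=; apply: ler_sum => i _.
by case: (boolP (i \in S)) => iS; case: ifP => // _; rewrite d_supp.
Qed.

Lemma price_of_ge_support T :
  price_of d S <= price_of d T -> {in S :\: T, forall j, d j = 0}.
Proof.
have dT : price_of d T = price_of d (S :&: T).
  rewrite /price_of (big_setID S) /= setIC [X in _ + X]big1 ?addr0 // => i.
  by rewrite inE => /andP[/d_supp].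
rewrite dT /price_of (big_setID T) /= gerDl => le0 j jST.
have /psumr_eq0P -> // : \sum_(i in S :\: T) d i = 0.
by apply/eqP; rewrite eq_le le0 sumr_ge0.
Qed.

End Supported.
End PriceSupport.

Section Demand.
Variables (R : realFieldType) (n : nat) (v : {set 'I_n} -> R).
Implicit Types (p q : 'I_n -> R) (S T : {set 'I_n}).

Lemma demand_revealed_preference p q S T :
  in_demand v p S -> in_demand v q T ->
  price_of p S - price_of q S <= price_of p T - price_of q T.
Proof. by move=> /(_ T) dS /(_ S) dT; lra. Qed.

Lemma in_demand_discount p q S T :
  in_demand v p S -> in_demand v q T ->
  price_of p T - price_of q T <= price_of p S - price_of q S ->
  in_demand v p T.
Proof. by move=> dS /(_ S) dT le U; have := dS U; lra. Qed.

Lemma in_demand_setU_free p S T :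
  {homo v : A B / A \subset B >-> A <= B} ->
  in_demand v p S -> {in T :\: S, forall j, p j = 0} ->
  in_demand v p (S :|: T).
Proof.
move=> vmon dS pT0 U; rewrite price_of_setU_free //.
by have := dS U; have := vmon _ _ (subsetUl S T); lra.
Qed.

End Demand.

Section Perturb.
Variables (R : realFieldType) (n : nat) (p : 'I_n -> R) (S : {set 'I_n}) (eps : R).
Hypothesis p_ge0 : nonneg_price p.

Lemma perturb_ge0 : nonneg_price (perturb p S eps).
Proof. by move=> i; rewrite /perturb; case: ifP => // _; rewrite le_max lexx orbT. Qed.

Lemma perturb_notin i : i \notin S -> perturb p S eps i = p i.
Proof. by rewrite /perturb => /negbTE ->. Qed.

Lemma perturb_le i : 0 <= eps -> perturb p S eps i <= p i.
Proof.
move=> eps_ge0; rewrite /perturb; case: ifP => // _.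
by rewrite ge_max p_ge0 andbT gerBl divr_ge0.
Qed.

Lemma perturb_lt i : 0 < eps -> i \in S -> 0 < p i -> perturb p S eps i < p i.
Proof.
move=> eps_gt0 iS pi_gt0; rewrite /perturb iS gt_max pi_gt0 andbT.
have n_gt0 : (0 < n)%N by apply: leq_ltn_trans (ltn_ord i).
by rewrite gtrBl divr_gt0 ?ltr0n.
Qed.

End Perturb.

Theorem mainTheorem18 (R : realFieldType) (n : nat)
  (v : {set 'I_n} -> R) (X X' : ('I_n -> R) -> {set 'I_n})
  (p : 'I_n -> R) (eps : R) :
  monotone_valuation v ->
  maximal_decision_map v X ->
  decision_map v X' ->
  nonneg_price p ->
  0 < eps ->
  [set j in X p | 0 < p j] \subset X' (perturb p (X p) eps) /\
  X' (perturb p (X p) eps) \subset X p.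
Proof.
move=> [_ _ vmon] [dmX maxX] dmX' p_ge0 eps_gt0.
set S := X p; set q := perturb p S eps; set S' := X' q.
have dS := dmX p p_ge0; have dS' := dmX' q (perturb_ge0 S eps p_ge0).
have d_ge0 i : 0 <= p i - q i by rewrite subr_ge0 perturb_le ?ltW.
have d_supp i : i \notin S -> p i - q i = 0.
  by move=> iS; rewrite /q perturb_notin // subrr.
have pref := demand_revealed_preference dS dS'; rewrite -!price_ofB in pref.
have d0 := price_of_ge_support d_ge0 d_supp pref.
have lower : [set j in S | 0 < p j] \subset S'.
  apply/subsetP => j; rewrite inE => /andP[jS pj_gt0]; apply/negPn/negP => jS'.
  have /eqP : p j - q j = 0 by apply: d0; rewrite inE jS' jS.
  by rewrite subr_eq0 gt_eqF // perturb_lt.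
split=> //.
have dS'p : in_demand v p S'.
  by apply: in_demand_discount dS dS' _; rewrite -!price_ofB price_of_le_support.
have p0 : {in S :\: S', forall j, p j = 0}.
  move=> j; rewrite inE => /andP[jS' jS]; apply/eqP; rewrite eq_le p_ge0 andbT.
  by rewrite leNgt; apply: contra jS' => pj; apply: (subsetP lower); rewrite inE jS.
apply/subsetP => i iS'; apply/negPn/negP => iS.
apply: (maxX p p_ge0 _ (in_demand_setU_free vmon dS'p p0)).
by rewrite properE subsetUr; apply/subsetPn; exists i; rewrite ?inE ?iS'.
Qed.
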